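(* Let $\{\vec S_n\}_{n=1}^6$ (indices modulo $6$) be an oriented, augmented right-angled hexagon in $\mathbb H^4$. For $n=1,\dots,6$ let $\tau_n$ be the unique orientation-preserving isometry of $\mathbb H^4$ with $\tau_n(\vec S_n)=\vec S_n$ and $\tau_n(\vec S_{n-1})=\vec S_{n+1}$; set $\iota_n=(\tau_n\cdots\tau_2\tau_1)^{-1}$ (with $\iota_0=\mathrm{id}$) and $\eta_n=\iota_{n-1}\tau_n\iota_{n-1}^{-1}$. Then (1) $\tau_6\tau_5\cdots\tau_1=\mathrm{id}$; (2) $\eta_1\eta_2\cdots\eta_6=\mathrm{id}$; (3) for $n=1,3,5$: $\iota_n(\vec S_n)=\vec S_1$ and $\iota_n(\vec S_{n+1})=\vec S_6$; (4) for $n=2,4,6$: $\iota_n(\vec S_n)=\vec S_6$ and $\iota_n(\vec S_{n+1})=\vec S_1$.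
   Context: $\mathbb H^4$ is hyperbolic 4-space (oriented). Lines and planes are complete totally geodesic submanifolds of dimension 1 and 2. A flag is a pair $(L,\Pi)$ of a line $L$ contained in a plane $\Pi$; an oriented flag has both $L$ and $\Pi$ oriented. Two lines are orthogonal if they meet perpendicularly; a line $L'$ and a flag $(L,\Pi)$ are orthogonal if $L'$ meets $L$ and is perpendicular to $\Pi$. An augmented right-angled hexagon in $\mathbb H^4$ is a cyclic six-tuple $\{S_n\}_{n=1}^6$ where either $S_1,S_3,S_5$ are lines and $S_2,S_4,S_6$ flags, or vice versa, such that $S_n$ and $S_{n+1}$ are orthogonal for all $n$; it is oriented if each $S_n$ is oriented. For an oriented flag and an oriented line orthogonal to each other, there is a unique orientation-preserving isometry of $\mathbb H^4$ sending this pair to any other such pair (so each $\tau_n$ exists and is unique). *)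

From HB Require Import structures.
From mathcomp Require Import all_boot all_order all_algebra.
From mathcomp Require Import boolp classical_sets reals.
Set Implicit Arguments. Unset Strict Implicit. Unset Printing Implicit Defensive.
Import Order.TTheory GRing.Theory Num.Theory.
Local Open Scope ring_scope.
Local Open Scope classical_set_scope.

(** Hyperboloid model of H^4 in Minkowski space R^{1,4}; vectors are column
    vectors 'cV_5, coordinate 0 is the time coordinate. *)

Section Hyp.
Variable R : realType.

Definition sigmx (m : nat) : 'M[R]_m :=
  \matrix_(i, j) (if i == j then (if (i : nat) == 0%N then -1 else 1) else 0).

Definition mink (u v : 'cV[R]_5) : R := (u^T *m sigmx 5 *m v) 0 0.

Definition H4 : set 'cV[R]_5 := [set x | mink x x = -1 /\ 0 < x 0 0].

(** A (k+1)-frame [x | v1 ... vk]: x a point of H^4 and v1..vk an orthonormal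
    family of tangent vectors at x. *)
Definition frame (k : nat) (F : 'M[R]_(5, k.+1)) : Prop :=
  F^T *m sigmx 5 *m F = sigmx k.+1 /\ 0 < F 0 0.

(** The oriented totally geodesic k-plane spanned by the frame F, encoded as
    the set of all positively oriented frames of it (based at any of its
    points): frames G spanning the same linear subspace with the same
    orientation (G = F M with det M > 0). *)
Definition oplane_of (k : nat) (F : 'M[R]_(5, k.+1)) : set 'M[R]_(5, k.+1) :=
  [set G | frame G /\ exists M : 'M[R]_k.+1, 0 < \det M /\ G = F *m M].

Definition is_oline (L : set 'M[R]_(5, 2)) : Prop :=
  exists F, frame F /\ L = oplane_of F.
Definition is_oplane (P : set 'M[R]_(5, 3)) : Prop :=
  exists F, frame F /\ P = oplane_of F.

Definition pts (k : nat) (P : set 'M[R]_(5, k.+1)) : set 'cV[R]_5 :=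
  [set x | exists2 G, P G & col 0 G = x].

Inductive obj :=
  | OLine of set 'M[R]_(5, 2)
  | OFlag of set 'M[R]_(5, 2) & set 'M[R]_(5, 3).

Definition obj_wf (S : obj) : Prop :=
  match S with
  | OLine L => is_oline L
  | OFlag L P => [/\ is_oline L, is_oplane P & pts L `<=` pts P]
  end.

Definition is_line (S : obj) : bool := if S is OLine _ then true else false.

Definition orth_lines (L L' : set 'M[R]_(5, 2)) : Prop :=
  exists G G', [/\ L G, L' G', col 0 G = col 0 G' & mink (col 1 G) (col 1 G') = 0].

Definition orth_line_flag (L' L : set 'M[R]_(5, 2)) (P : set 'M[R]_(5, 3)) : Prop :=
  exists G' G H, [/\ L' G' /\ L G /\ P H,
    col 0 G' = col 0 G, col 0 G = col 0 H,
    mink (col 1 G') (col 1 H) = 0 & mink (col 1 G') (col 2 H) = 0].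

Definition orth (S T : obj) : Prop :=
  match S, T with
  | OLine l, OFlag L P => orth_line_flag l L P
  | OFlag L P, OLine l => orth_line_flag l L P
  | _, _ => False
  end.

(** oriented augmented right-angled hexagon, indexed by nat with period 6
    (S_1, ..., S_6 and S_0 = S_6, S_7 = S_1, ...) *)
Definition aug_hexagon (S : nat -> obj) : Prop :=
  [/\ forall n, S (n + 6)%N = S n,
      forall n, obj_wf (S n),
      (forall n, is_line (S n) = odd n) \/ (forall n, is_line (S n) = ~~ odd n)
    & forall n, orth (S n) (S n.+1)].

(** orientation-preserving isometries of H^4 = SO^+(1,4), acting on column
    vectors by x |-> A x *)
Definition or_isom (A : 'M[R]_5) : Prop :=
  [/\ A^T *m sigmx 5 *m A = sigmx 5, \det A = 1 & 0 < A 0 0].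

Definition act_set (k : nat) (A : 'M[R]_5) (P : set 'M[R]_(5, k.+1)) :=
  (fun G => A *m G) @` P.

Definition act (A : 'M[R]_5) (S : obj) : obj :=
  match S with
  | OLine L => OLine (act_set A L)
  | OFlag L P => OFlag (act_set A L) (act_set A P)
  end.

Fixpoint taucomp (tau : nat -> 'M[R]_5) (n : nat) : 'M[R]_5 :=
  if n is m.+1 then tau n *m taucomp tau m else 1%:M.

Definition hiota (tau : nat -> 'M[R]_5) (n : nat) : 'M[R]_5 :=
  invmx (taucomp tau n).

Definition heta (tau : nat -> 'M[R]_5) (n : nat) : 'M[R]_5 :=
  hiota tau n.-1 *m tau n *m invmx (hiota tau n.-1).

End Hyp.

(* Let T = tau_6 ... tau_1. By induction, tau_n ... tau_1 carries {S_0, S_1}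
   onto {S_n, S_(n+1)}, in an order given by the parity of n, so T fixes
   S_0 = S_6 and S_1 = S_7: an oriented line and an oriented flag orthogonal to
   it. An isometry preserving such a pair fixes their common point, hence the
   frames of both lines there, hence a second point of the flag's line and
   with it the flag's plane. It then fixes pointwise a nondegenerate
   hyperplane of R^(1,4), and determinant 1 excludes the reflection in it, so
   T = id. The product of the eta_n telescopes to T, and the claims on iota_n
   invert the orbit computation. *)

From HB Require Import structures.
From mathcomp Require Import all_boot all_order all_algebra.
From mathcomp Require Import boolp classical_sets reals.
From mathcomp Require Import ring lra.
Import Order.TTheory GRing.Theory Num.Theory.
Local Open Scope ring_scope.
Local Open Scope classical_set_scope.
Set Implicit Arguments. Unset Strict Implicit. Unset Printing Implicit Defensive.

Lemma lift0_ord0 n : lift ord0 (ord0 : 'I_n.+1) = 1 :> 'I_n.+2.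
Proof. exact: val_inj. Qed.

Lemma col_mul (T : pzSemiRingType) m n p (A : 'M[T]_(m, n)) (B : 'M[T]_(n, p)) j :
  col j (A *m B) = A *m col j B.
Proof. by rewrite !colE mulmxA. Qed.

Lemma det_mx22 (T : comPzRingType) (B : 'M[T]_2) : \det B = B 0 0 * B 1 1 - B 0 1 * B 1 0.
Proof.
rewrite (expand_det_col _ 0) !big_ord_recr big_ord0 /= add0r /cofactor !det_mx11 !mxE /=.
have -> : lift 0 (ord0 : 'I_1) = 1 by apply/val_inj.
have -> : lift (widen_ord (leqnSn 1) ord_max) (ord0 : 'I_1) = 1 by apply/val_inj.
have -> : lift (@ord_max 1) (ord0 : 'I_1) = 0 by apply/val_inj.
have -> : widen_ord (leqnSn 1) (ord_max : 'I_1) = 0 by apply/val_inj.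
have -> : (ord_max : 'I_2) = 1 by apply/val_inj.
by rewrite expr0 expr1; ring.
Qed.

Lemma mulmx_invK (T : comUnitRingType) m n p
    (A : 'M[T]_(m, n)) (B : 'M[T]_n) (C : 'M[T]_(n, p)) :
  B \in unitmx -> A *m B *m (invmx B *m C) = A *m C.
Proof. by move=> uB; rewrite mulmxA mulmxK. Qed.

(* Sizes are written [1 + m] so that [row_mx v Q] is square without casts. *)
Section Hyperplane.
Variables (F : idomainType) (m : nat).

Lemma det_row_mx_linear (c : F) (a b : 'cV[F]_(1 + m)) (Q : 'M[F]_(1 + m, m)) :
  \det (row_mx (c *: a + b) Q) = c * \det (row_mx a Q) + \det (row_mx b Q).
Proof.
rewrite -det_tr -[\det (row_mx a Q)]det_tr -[\det (row_mx b Q)]det_tr !tr_row_mx.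
have lift0 i : lift (lshift m (0 : 'I_1)) i = rshift 1 i by apply/val_inj.
rewrite -[X in _ = _ + X]mul1r; apply: (determinant_multilinear (i0 := lshift m 0)).
- by rewrite !rowKu !row_id linearD linearZ scale1r.
all: by apply/matrixP => i j; rewrite !mxE lift0 (unsplitK (inr _ : _ + _)).
Qed.

Lemma isom_fix_hyperplane_eq1 (J A : 'M[F]_(1 + m)) (Q : 'M[F]_(1 + m, m)) :
  A^T *m J *m A = J -> \det A = 1 -> Q^T *m J *m Q \in unitmx -> A *m Q = Q ->
  A = 1%:M.
Proof.
move=> isoA detA gramQ AQ.
(* For each [y], [v := A y - y] is [J]-orthogonal to [Q] and [row_mx v Q] is
   singular because [\det A = 1]; a kernel vector of it has zero [Q]-part by
   nondegeneracy, which forces [v = 0]. *)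
suff fixA (y : 'cV_(1 + m)) : A *m y = y.
  apply/matrixP => i j; have /colP/(_ i) := fixA (delta_mx j 0).
  by rewrite -colE !mxE andbT eq_sym.
set v := A *m y - y.
have Qv : Q^T *m J *m v = 0.
  by rewrite mulmxBr -{1}AQ trmx_mul !mulmxA -(mulmxA Q^T) -(mulmxA Q^T) isoA subrr.
have detv : \det (row_mx v Q) = 0.
  have Ay : \det (row_mx (A *m y) Q) = \det (row_mx y Q).
    by rewrite -{1}AQ -mul_mx_row det_mulmx detA mul1r.
  have := det_row_mx_linear 1 v y Q; rewrite scale1r mul1r {1}/v subrK Ay => vy.
  by apply: (addIr (\det (row_mx y Q))); rewrite -vy add0r.
have [r r_neq0 rv] : exists2 r : 'cV_(1 + m), r != 0 & row_mx v Q *m r = 0.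
  have /det0P[r r_neq0 rv] : \det (row_mx v Q)^T == 0 by rewrite det_tr detv.
  exists r^T; first by rewrite trmx_eq0.
  by apply: trmx_inj; rewrite trmx_mul trmxK rv trmx0.
move: rv r_neq0; rewrite -[r]vsubmxK mul_row_col; set a := usubmx r; set b := dsubmx r.
move=> rv; have b0 : b = 0.
  have := congr1 (mulmx (Q^T *m J)) rv.
  rewrite mulmxDr !mulmxA Qv mul0mx add0r mulmx0.
  by move/(congr1 (mulmx (invmx (Q^T *m J *m Q)))); rewrite mulKmx // mulmx0.
rewrite b0 mulmx0 addr0 [a]mx11_scalar mul_mx_scalar in rv *.
move=> a_neq0; apply/eqP; rewrite -subr_eq0; apply/eqP.
have {}a_neq0 : a 0 0 != 0 by apply: contra a_neq0 => /eqP->; rewrite raddf0 col_mx0.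
by apply/eqP; move/eqP: rv; rewrite scalemx_eq0 (negbTE a_neq0).
Qed.

End Hyperplane.

Section Minkowski.
Variable R : realType.
Local Notation J := (sigmx R 5).

Lemma sigmx_tr m : (sigmx R m)^T = sigmx R m.
Proof.
apply/matrixP => i j; rewrite !mxE.
by case: (eqVneq i j) => [->|ij]; rewrite ?eqxx // eq_sym (negbTE ij).
Qed.

Lemma sigmxK m : sigmx R m *m sigmx R m = 1%:M.
Proof.
apply/matrixP => i j; rewrite !mxE (bigD1 i) //= big1 => [|k /negbTE ki]; last first.
  by rewrite !mxE eq_sym ki mul0r.
rewrite !mxE eqxx addr0; case: (eqVneq i j) => [-> | _]; last by rewrite mulr0.
by case: ifP; rewrite ?mulrNN mulr1.
Qed.

Lemma sigmx_unit m : sigmx R m \in unitmx.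
Proof. exact: (mulmx1_unit (sigmxK m)).1. Qed.

Lemma mink_gram k l (F : 'M[R]_(5, k)) (G : 'M[R]_(5, l)) i j :
  (F^T *m J *m G) i j = mink (col i F) (col j G).
Proof.
rewrite /mink tr_col rowE colE !mulmxA -!(mulmxA (delta_mx 0 i)) -rowE -colE.
by rewrite !mxE.
Qed.

Lemma minkC (u v : 'cV[R]_5) : mink u v = mink v u.
Proof.
by rewrite /mink -[in LHS](trmxK (u^T *m _ *m v)) mxE !trmx_mul trmxK sigmx_tr mulmxA.
Qed.

Lemma frame_mink k (F : 'M[R]_(5, k.+1)) i j :
  frame F -> mink (col i F) (col j F) = sigmx R k.+1 i j.
Proof. by case=> gF _; rewrite -mink_gram gF. Qed.

Lemma frame_inj k p (F : 'M[R]_(5, k.+1)) (a b : 'M[R]_(k.+1, p)) :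
  frame F -> F *m a = F *m b -> a = b.
Proof.
case=> gF _ Fab; rewrite -[a]mul1mx -[b]mul1mx -(sigmxK k.+1) -{2 4}gF.
by rewrite -!mulmxA Fab.
Qed.

Lemma sigmx_isom_det_eq1 k (K : 'M[R]_k.+1) :
  K^T *m sigmx R k.+1 *m K = sigmx R k.+1 -> 0 < \det K -> \det K = 1.
Proof.
move=> isoK detK_gt0.
have ds : \det (sigmx R k.+1) != 0 by rewrite -unitfE -unitmxE sigmx_unit.
have := congr1 determinant isoK.
rewrite !det_mulmx det_tr mulrAC -expr2 -[RHS]mul1r => /(mulIf ds)/eqP.
by rewrite sqrf_eq1 => /orP[/eqP // | /eqP dK]; move: detK_gt0; rewrite dK ltr0N1.
Qed.

Lemma oplane_frame k (P : set 'M[R]_(5, k.+1)) G :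
  (exists F, frame F /\ P = oplane_of F) -> P G -> frame G.
Proof. by move=> [F [_ ->]] []. Qed.

Lemma oplane_frame_change k (P : set 'M[R]_(5, k.+1)) G G' :
  (exists F, frame F /\ P = oplane_of F) -> P G -> P G' ->
  exists2 K, G' = G *m K & K^T *m sigmx R k.+1 *m K = sigmx R k.+1 /\ \det K = 1.
Proof.
move=> [F [_ ->]] [fG [M [detM eG]]] [fG' [M' [detM' eG']]].
have uM : M \in unitmx by rewrite unitmxE unitfE gt_eqF.
have GK : G' = G *m (invmx M *m M') by rewrite eG eG' mulmxA mulmxK.
exists (invmx M *m M') => //.
have isoK : (invmx M *m M')^T *m sigmx R k.+1 *m (invmx M *m M') = sigmx R k.+1.
  by case: fG' => {2}<- _; case: fG => <- _; rewrite GK !trmx_mul !mulmxA.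
split=> //; apply: sigmx_isom_det_eq1 isoK _.
by rewrite det_mulmx det_inv mulr_gt0 // invr_gt0.
Qed.

Lemma act_set_mem k (A : 'M[R]_5) (P : set 'M[R]_(5, k.+1)) G :
  act_set A P = P -> P G -> P (A *m G).
Proof. by move=> AP PG; rewrite -AP; exists G. Qed.

Lemma fix_oline_frame (A : 'M[R]_5) (l : set 'M[R]_(5, 2)) G :
  is_oline l -> act_set A l = l -> l G -> A *m col 0 G = col 0 G -> A *m G = G.
Proof.
move=> ol Al lG Ax.
have [K AG [isoK detK]] := oplane_frame_change ol lG (act_set_mem Al lG).
have Ke0 : K *m delta_mx 0 0 = delta_mx 0 0 :> 'cV_2.
  by apply: (frame_inj (oplane_frame ol lG)); rewrite mulmxA -AG -mulmxA -!colE.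
suff K1 : K = 1%:M by rewrite AG K1 mulmx1.
apply: (isom_fix_hyperplane_eq1 (m := 1) isoK detK _ Ke0).
by rewrite unitmxE det_mx11 trmx_delta -rowE -colE !mxE /= unitfE oppr_eq0 oner_eq0.
Qed.

Lemma det_gram2 (a b : 'cV[R]_5) :
  \det ((row_mx a b)^T *m J *m row_mx a b) = mink a a * mink b b - mink a b * mink b a.
Proof.
have c0 : col (0 : 'I_2) (row_mx a b) = a.
  by rewrite -[RHS](col_id 0) -(colKl 0 a b); congr col; apply: val_inj.
have c1 : col (1 : 'I_2) (row_mx a b) = b.
  by rewrite -[RHS](col_id 0) -(colKr 0 a b); congr col; apply: val_inj.
by rewrite det_mx22 !mink_gram c0 c1.
Qed.

Lemma fix_oplane_frame (A : 'M[R]_5) (P : set 'M[R]_(5, 3)) H H' :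
  is_oplane P -> act_set A P = P -> P H -> P H' ->
  A *m col 0 H = col 0 H -> A *m col 0 H' = col 0 H' ->
  mink (col 0 H) (col 0 H') ^+ 2 != 1 -> A *m H = H.
Proof.
move=> oP AP PH PH' Ax Ay xy.
have fH := oplane_frame oP PH.
have [K AH [isoK detK]] := oplane_frame_change oP PH (act_set_mem AP PH).
have [K' eH' _] := oplane_frame_change oP PH PH'.
pose e0 : 'cV[R]_3 := delta_mx 0 0; pose z := col 0 K'.
have Hz : H *m z = col 0 H' by rewrite eH' col_mul.
have Ke0 : K *m e0 = e0.
  by apply: (frame_inj fH); rewrite mulmxA -AH -mulmxA -colE.
have Kz : K *m z = z.
  by apply: (frame_inj fH); rewrite mulmxA -AH -mulmxA Hz.
suff K1 : K = 1%:M by rewrite AH K1 mulmx1.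
have gram : (row_mx e0 z)^T *m sigmx R 3 *m row_mx e0 z \in unitmx.
  have -> : (row_mx e0 z)^T *m sigmx R 3 *m row_mx e0 z =
      (row_mx (col 0 H) (col 0 H'))^T *m J *m row_mx (col 0 H) (col 0 H').
    by case: fH => <- _; rewrite -Hz colE -mul_mx_row !trmx_mul !mulmxA.
  rewrite unitmxE unitfE det_gram2 (minkC (col 0 H')) (frame_mink _ _ fH).
  rewrite (frame_mink _ _ (oplane_frame oP PH')) !mxE /=.
  by rewrite mulrNN mul1r subr_eq0 eq_sym -expr2.
apply: (isom_fix_hyperplane_eq1 (m := 2) isoK detK gram).
by have := mul_mx_row K e0 z; rewrite Ke0 Kz.
Qed.

(* [A x] lies both on [l] and on [P], which meet only at [x] since [l] is
   perpendicular to [P]; a positive multiple of [x] in H^4 is [x] itself. *)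
Lemma fix_orth_foot (A : 'M[R]_5) (l : set 'M[R]_(5, 2)) (P : set 'M[R]_(5, 3)) G H :
  is_oline l -> is_oplane P -> act_set A l = l -> act_set A P = P -> l G -> P H ->
  col 0 G = col 0 H -> (col 1 G)^T *m J *m H = 0 -> A *m col 0 H = col 0 H.
Proof.
move=> ol oP Al AP lG PH eGH uH.
have fG := oplane_frame ol lG.
have [M AG [isoM _]] := oplane_frame_change ol lG (act_set_mem Al lG).
have [K AH _] := oplane_frame_change oP PH (act_set_mem AP PH).
have AxG : A *m col 0 H = G *m col 0 M by rewrite -eGH -!col_mul AG.
have AxH : A *m col 0 H = H *m col 0 K by rewrite -!col_mul AH.
have M10 : M 1 0 = 0.
  have := congr1 (mulmx ((col 1 G)^T *m J)) (etrans (esym AxG) AxH).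
  rewrite !mulmxA uH mul0mx => /matrixP/(_ 0 0).
  rewrite !mxE !big_ord_recl big_ord0 !mink_gram col_id !(frame_mink _ _ fG) !mxE /=.
  by rewrite lift0_ord0 mul0r add0r mul1r addr0.
have M00 : M 0 0 = 1.
  have sq : M 0 0 ^+ 2 = 1.
    move/matrixP: isoM => /(_ 0 0); rewrite !(mxE, big_ord_recl, big_ord0) /=.
    by rewrite lift0_ord0 M10 => h; nra.
  have : 0 < (A *m G) 0 0 by case: (oplane_frame ol (act_set_mem Al lG)).
  rewrite AG !(mxE, big_ord_recl, big_ord0) /= lift0_ord0 M10 mulr0 !addr0.
  by case: fG => _ G00; rewrite pmulr_rgt0 // => M00; nra.
rewrite AxG -eGH; apply/colP => i.
by rewrite !(mxE, big_ord_recl, big_ord0) /= lift0_ord0 M00 M10 mulr1 mulr0 !addr0.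
Qed.

Lemma oline_far_frame (L : set 'M[R]_(5, 2)) G :
  is_oline L -> L G -> exists B, L (G *m B) /\ mink (col 0 G) (col 0 (G *m B)) = - (5 / 4).
Proof.
move=> oL LG; have [gG G00] := oplane_frame oL LG.
(* A boost along [L] with cosh 5/4 and sinh +-3/4, the sign keeping the time
   coordinate positive. *)
pose s : R := if 0 <= G 0 1 then 3 / 4 else - (3 / 4).
have ss : s * s = 9 / 16 by rewrite /s; case: ifP => _; rewrite ?mulrNN; field.
have Gs : 0 <= G 0 1 * s by rewrite /s; case: ifP => h; nra.
pose B : 'M[R]_2 := \matrix_(i, j) if i == j then 5 / 4 else s.
have gramGB : (G *m B)^T *m J *m (G *m B) = B^T *m sigmx R 2 *m B.
  by rewrite trmx_mul !mulmxA -[in LHS](mulmxA B^T) -[in LHS](mulmxA B^T) gG.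
exists B; split; last first.
  by rewrite -mink_gram mulmxA gG !(mxE, big_ord_recl, big_ord0) /=; lra.
have isoB : B^T *m sigmx R 2 *m B = sigmx R 2.
  apply/matrixP => i j; rewrite !(mxE, big_ord_recl, big_ord0) /=.
  by case: i => [[|[|//]] ?]; case: j => [[|[|//]] ?]; rewrite /=; lra.
move: LG; case: oL => F [_ ->] [_ [M [detM eG]]]; split.
  split; first by rewrite gramGB isoB.
  by rewrite !(mxE, big_ord_recl, big_ord0) /= lift0_ord0; nra.
exists (M *m B); split; last by rewrite eG mulmxA.
by rewrite det_mulmx mulr_gt0 // det_mx22 !mxE /=; lra.
Qed.

Lemma fix_orth_line_flag_eq1 (A : 'M[R]_5) (l L : set 'M[R]_(5, 2))
    (P : set 'M[R]_(5, 3)) :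
  A^T *m J *m A = J -> \det A = 1 ->
  is_oline l -> is_oline L -> is_oplane P -> pts L `<=` pts P -> orth_line_flag l L P ->
  act_set A l = l -> act_set A L = L -> act_set A P = P -> A = 1%:M.
Proof.
move=> isoA detA ol oL oP LP [G' [G [H [[lG' [LG PH]] eG'G eGH uh1 uh2]]]] Al AL AP.
have fG' := oplane_frame ol lG'.
set u := col 1 G'.
have uH : u^T *m J *m H = 0.
  apply/matrixP => i j; rewrite ord1 mink_gram col_id mxE.
  have [->|[->|->]] : j = 0 \/ j = 1 \/ j = 2.
    by case: j => [[|[|[|//]]] ?]; [left | right; left | right; right]; apply: val_inj.
  - by rewrite -eGH -eG'G (frame_mink _ _ fG') mxE.
  - exact: uh1.
  - exact: uh2.
have Ax := fix_orth_foot ol oP Al AP lG' PH (etrans eG'G eGH) uH.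
have AG' : A *m G' = G' by apply: (fix_oline_frame ol Al lG'); rewrite eG'G eGH.
have AG : A *m G = G by apply: (fix_oline_frame oL AL LG); rewrite eGH.
have [B [LGB xy]] := oline_far_frame oL LG.
have [H' PH' eH'] : pts P (col 0 (G *m B)) by apply: LP; exists (G *m B).
have AH : A *m H = H.
  apply: (fix_oplane_frame oP AP PH PH' Ax).
    by rewrite eH' -col_mul; congr col; rewrite mulmxA AG.
  by rewrite eH' -eGH xy sqrrN; apply/eqP; lra.
have gram : (row_mx u H)^T *m J *m row_mx u H \in unitmx.
  have uu : u^T *m J *m u = 1%:M.
    by apply/matrixP => i j; rewrite !ord1 mink_gram col_id (frame_mink _ _ fG') !mxE.
  have Hu : H^T *m J *m u = 0.
    by apply: trmx_inj; rewrite !trmx_mul trmxK sigmx_tr mulmxA uH trmx0.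
  rewrite tr_row_mx mul_col_mx mul_col_row uu uH Hu (oplane_frame oP PH).1.
  by rewrite unitmxE det_ublock det1 mul1r -unitmxE sigmx_unit.
apply: (isom_fix_hyperplane_eq1 (m := 4) isoA detA gram).
by have := mul_mx_row A u H; rewrite -col_mul AG' AH.
Qed.

End Minkowski.

Section Hexagon.
Variable R : realType.

Lemma act_mul (A B : 'M[R]_5) X : act (A *m B) X = act A (act B X).
Proof.
have actsM k (P : set 'M[R]_(5, k.+1)) : act_set (A *m B) P = act_set A (act_set B P).
  by rewrite /act_set image_comp; congr image; apply: funext => G /=; rewrite mulmxA.
by case: X => [l | L P] /=; rewrite !actsM.
Qed.

Lemma act1 (X : obj R) : act 1%:M X = X.
Proof.
have acts1 k (P : set 'M[R]_(5, k.+1)) : act_set 1%:M P = P.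
  by rewrite /act_set (_ : mulmx 1%:M = id) ?image_id //; apply: funext => G; rewrite mul1mx.
by case: X => [l | L P] /=; rewrite !acts1.
Qed.

Lemma act_invmx (A : 'M[R]_5) X Y : A \in unitmx -> act A X = Y -> act (invmx A) Y = X.
Proof. by move=> uA <-; rewrite -act_mul mulVmx // act1. Qed.

Lemma fix_orth_pair_eq1 (A : 'M[R]_5) (X Y : obj R) :
  A^T *m sigmx R 5 *m A = sigmx R 5 -> \det A = 1 ->
  obj_wf X -> obj_wf Y -> orth X Y -> act A X = X -> act A Y = Y -> A = 1%:M.
Proof.
move=> isoA detA; case: X => [l | L P]; case: Y => [l' | L' P'] //=.
- move=> ol [oL oP LP] orth [Al] [AL AP].
  exact: (fix_orth_line_flag_eq1 isoA detA ol oL oP LP).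
- move=> [oL oP LP] ol orth [AL AP] [Al].
  exact: (fix_orth_line_flag_eq1 isoA detA ol oL oP LP).
Qed.

Variables (S : nat -> obj R) (tau : nat -> 'M[R]_5).
Hypothesis tauS : forall n : nat, (1 <= n <= 6)%N ->
  [/\ or_isom (tau n), act (tau n) (S n) = S n & act (tau n) (S n.-1) = S n.+1].

Lemma taucomp_isom n : (n <= 6)%N ->
  (taucomp tau n)^T *m sigmx R 5 *m taucomp tau n = sigmx R 5 /\ \det (taucomp tau n) = 1.
Proof.
elim: n => [|n IH] n_le6; first by rewrite /= trmx1 mul1mx mulmx1 det1.
have [[isoT detT] [[isoTau detTau _] _ _]] := (IH (ltnW n_le6), @tauS n.+1 n_le6).
split; last by rewrite /= det_mulmx detTau detT mulr1.
by rewrite /= trmx_mul -!mulmxA (mulmxA (tau _)^T) (mulmxA _ (tau _)) isoTau mulmxA isoT.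
Qed.

Lemma taucomp_unit n : (n <= 6)%N -> taucomp tau n \in unitmx.
Proof. by move/taucomp_isom => [_ detT]; rewrite unitmxE detT unitr1. Qed.

(* [S (odd n)] is [S 1] for odd [n] and [S 0] for even [n]. *)
Lemma act_taucomp n : (n <= 6)%N ->
  act (taucomp tau n) (S (odd n)) = S n /\ act (taucomp tau n) (S (~~ odd n)) = S n.+1.
Proof.
elim: n => [|n IH] n_le6; first by rewrite /= !act1.
have [[Todd Teven] [_ fixS moveS]] := (IH (ltnW n_le6), @tauS n.+1 n_le6).
by rewrite /= !act_mul negbK Teven Todd; split.
Qed.

Lemma heta_taucomp n : heta tau n.+1 = invmx (taucomp tau n) *m taucomp tau n.+1.
Proof. by rewrite /heta /hiota invmxK /= mulmxA. Qed.

Lemma act_hiota n : (n <= 6)%N ->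
  act (hiota tau n) (S n) = S (odd n) /\ act (hiota tau n) (S n.+1) = S (~~ odd n).
Proof.
move=> n_le6; have [Todd Teven] := act_taucomp n_le6.
by split; apply: act_invmx; rewrite ?taucomp_unit.
Qed.

End Hexagon.

Unset Implicit Arguments.
Local Close Scope classical_set_scope.

Theorem lemma6p6 (R : realType) (S : nat -> obj R) (tau : nat -> 'M[R]_5) :
  aug_hexagon S ->
  (forall n : nat, (1 <= n <= 6)%N ->
     [/\ or_isom (tau n), act (tau n) (S n) = S n & act (tau n) (S n.-1) = S n.+1]) ->
  [/\ tau 6%N *m tau 5%N *m tau 4%N *m tau 3%N *m tau 2%N *m tau 1%N = 1%:M,
      heta tau 1 *m heta tau 2 *m heta tau 3 *m heta tau 4 *m heta tau 5 *m heta tau 6 = 1%:M,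
      (forall n : nat, n \in [:: 1; 3; 5]%N ->
         act (hiota tau n) (S n) = S 1%N /\ act (hiota tau n) (S n.+1) = S 6%N) &
      (forall n : nat, n \in [:: 2; 4; 6]%N ->
         act (hiota tau n) (S n) = S 6%N /\ act (hiota tau n) (S n.+1) = S 1%N)].
Proof.
move=> [S_period S_wf _ S_orth] tauS.
have S60 : S 6%N = S 0%N := S_period 0%N.
have T6 : taucomp tau 6 = 1%:M.
  have [isoT detT] := taucomp_isom tauS (isT : (6 <= 6)%N).
  have [T6S0 T6S1] := act_taucomp tauS (isT : (6 <= 6)%N).
  apply: (fix_orth_pair_eq1 isoT detT (S_wf 0%N) (S_wf 1%N) (S_orth 0%N)).
    exact: etrans T6S0 S60.
  exact: etrans T6S1 (S_period 1%N).
have hiotaS n : (n <= 6)%N ->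
    act (hiota tau n) (S n) = S (if odd n then 1 else 6)%N /\
    act (hiota tau n) (S n.+1) = S (if odd n then 6 else 1)%N.
  by move/(act_hiota tauS); case: (odd n); rewrite /= S60.
split.
- by rewrite -T6 /= mulmx1 !mulmxA.
- rewrite !heta_taucomp !mulmx_invK ?(taucomp_unit tauS) //.
  by rewrite invmx1 mul1mx T6.
- by move=> n; rewrite !inE => /or3P[]/eqP->; apply: hiotaS.
- by move=> n; rewrite !inE => /or3P[]/eqP->; apply: hiotaS.
Qed.
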